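(* Let $a>b>0$, $c^2=a^2-b^2$, $\delta=\sqrt{a^4-a^2b^2+b^4}$, and let $E$ be the ellipse $\frac{x^2}{a^2}+\frac{y^2}{b^2}=1$. Let $C$ be the caustic of the 3-periodic billiard orbits of $E$, i.e. the ellipse $\frac{x^2}{a_c^2}+\frac{y^2}{b_c^2}=1$ with $a_c=\frac{a(\delta-b^2)}{c^2}$, $b_c=\frac{b(a^2-\delta)}{c^2}$. Let $A_b$ and $A_c$ be the areas enclosed by $E$ and $C$. Then for every 3-periodic billiard orbit in $E$, with inradius $r$ and circumradius $R$, \[ \frac{A_c}{A_b}=\frac{r}{2R}. \]
   Context: A 3-periodic billiard orbit in the ellipse $E$ is a nondegenerate triangle $P_1P_2P_3$ with all vertices on $E$ such that at each vertex $P_i$ the normal line to $E$ at $P_i$ bisects the interior angle of the triangle at $P_i$. All sides of all such orbits are tangent to the confocal ellipse $C$ described in the claim. *)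

From Stdlib Require Import Reals.
Open Scope R_scope.

Definition pt := (R * R)%type.

Definition on_ellipse (a b : R) (P : pt) : Prop :=
  (fst P)^2 / a^2 + (snd P)^2 / b^2 = 1.

Definition dist (P Q : pt) : R :=
  sqrt ((fst P - fst Q)^2 + (snd P - snd Q)^2).

Definition cross3 (P Q S : pt) : R :=
  (fst Q - fst P) * (snd S - snd P) - (snd Q - snd P) * (fst S - fst P).

Definition nondegenerate (P1 P2 P3 : pt) : Prop := cross3 P1 P2 P3 <> 0.

Definition bisector_dir (P Q S : pt) : pt :=
  ((fst Q - fst P) / dist P Q + (fst S - fst P) / dist P S,
   (snd Q - snd P) / dist P Q + (snd S - snd P) / dist P S).

(* The normal line to E : x^2/a^2 + y^2/b^2 = 1 at P has direction
   (x/a^2, y/b^2); it bisects the interior angle at P iff it is parallel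
   to the bisector direction (both lines pass through P). *)
Definition normal_bisects (a b : R) (P Q S : pt) : Prop :=
  let v := bisector_dir P Q S in
  (fst P / a^2) * snd v - (snd P / b^2) * fst v = 0.

Definition billiard_3orbit (a b : R) (P1 P2 P3 : pt) : Prop :=
  nondegenerate P1 P2 P3 /\
  on_ellipse a b P1 /\ on_ellipse a b P2 /\ on_ellipse a b P3 /\
  normal_bisects a b P1 P2 P3 /\ normal_bisects a b P2 P3 P1 /\
  normal_bisects a b P3 P1 P2.

Definition tri_area (P1 P2 P3 : pt) : R := Rabs (cross3 P1 P2 P3) / 2.

Definition inradius (P1 P2 P3 : pt) : R :=
  2 * tri_area P1 P2 P3 / (dist P1 P2 + dist P2 P3 + dist P3 P1).

Definition circumradius (P1 P2 P3 : pt) : R :=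
  dist P1 P2 * dist P2 P3 * dist P3 P1 / (4 * tri_area P1 P2 P3).

Definition ellipse_area (p q : R) : R := PI * p * q.

(* Write n_P = (x/a^2, y/b^2) for the normal of E at P and u_i for the unit
   direction of the side P_i P_(i+1).  The bisector condition at P is the
   reflection law n_P.u_out = - n_P.u_in, and along a chord PQ of E one has
   n_P.u = - n_Q.u; hence J = n_P.u_out is the same at the three vertices.
   Eliminating n_P at a vertex gives, for the consecutive directions
   u = e^(i alpha), u' = e^(i beta), the relation
   cos (beta - alpha) - k cos (alpha + beta) = L  with  k = J^2 c^2,
   L = 1 - J^2 (a^2 + b^2).  In z = e^(i alpha), z' = e^(i beta) this is a
   symmetric biquadratic equation B(z, z') = 0 satisfied by the three pairs of
   distinct points u_1, u_2, u_3, so Vieta's formulas give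
   k e_2 = -(1 + 2L) and e_1 + k e_3 = 0; the same holds for the 1/u_i, and
   together these force k^2 = 1 + 2L and sum_(i<j) u_i.u_j = (k^2 - 3)/2.
   The first equation makes k the nonnegative root (2 delta - a^2 - b^2)/c^2
   of a quadratic, and Carnot's identity r/R = cos A + cos B + cos C - 1 turns
   the second into r/(2R) = (1 - k^2)/4 = a_c b_c / (a b). *)

From Stdlib Require Import Reals Lra.
From Coquelicot Require Import Complex.
Open Scope R_scope.

Definition dot (u v : pt) : R := fst u * fst v + snd u * snd v.

Definition wedge (u v : pt) : R := fst u * snd v - snd u * fst v.

Lemma wedge_neq0_neq (u v : pt) : wedge u v <> 0 -> u <> v.
Proof. intros H E. apply H. rewrite E. unfold wedge. ring. Qed.

(* For v = (cos alpha, sin alpha) and w = (cos beta, sin beta) this reads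
   cos (beta - alpha) - k cos (alpha + beta) = L. *)
Definition caustic_relation (k L : R) (v w : pt) : Prop :=
  dot v w - k * (fst v * fst w - snd v * snd w) = L.

Section Vieta.
Local Open Scope C_scope.

Definition biquadratic (k L : R) (x y : C) : C :=
  x * x + y * y - k * (x * x * y * y) - k - 2 * L * x * y.

Lemma Cmult_eq_0_reg_l (a x : C) : a <> 0 -> a * x = 0 -> x = 0.
Proof. intros Ha H. replace x with (/ a * (a * x)) by (field; exact Ha). rewrite H. ring. Qed.

Lemma Cminus_diag_uniq (x y : C) : x - y = 0 -> x = y.
Proof. intros E. replace x with (x - y + y) by ring. rewrite E. ring. Qed.

Lemma Cminus_eq_contra (x y : C) : x <> y -> x - y <> 0.
Proof. intros H E. apply H, Cminus_diag_uniq, E. Qed.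

Lemma Clin_comb_eq_0 (c d : C) [e f g : C] : e = 0 -> f = 0 -> g = c * e + d * f -> g = 0.
Proof. intros -> -> ->. ring. Qed.

Lemma biquadratic_sym k L (x y : C) : biquadratic k L x y = biquadratic k L y x.
Proof. unfold biquadratic. ring. Qed.

Lemma biquadratic_inv k L (x y : C) : x <> 0 -> y <> 0 ->
  biquadratic k L x y = 0 -> biquadratic k L (/ x) (/ y) = 0.
Proof.
  intros Hx Hy B.
  replace (biquadratic k L (/ x) (/ y)) with (biquadratic k L x y / (x * x * y * y))
    by (unfold biquadratic; field; tauto).
  rewrite B. field. tauto.
Qed.

Lemma biquadratic_root_sum k L (x y y' : C) : y <> y' ->
  biquadratic k L x y = 0 -> biquadratic k L x y' = 0 ->
  (y + y') * (1 - k * (x * x)) - 2 * L * x = 0.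
Proof.
  intros Hy B B'. apply (Cmult_eq_0_reg_l (y - y')); [now apply Cminus_eq_contra|].
  apply (Clin_comb_eq_0 1 (-1) B B'). unfold biquadratic. ring.
Qed.

Lemma biquadratic_vieta k L (z1 z2 z3 : C) : z1 <> z2 -> z2 <> z3 -> z3 <> z1 ->
  biquadratic k L z1 z2 = 0 -> biquadratic k L z2 z3 = 0 -> biquadratic k L z3 z1 = 0 ->
  1 + 2 * L + k * (z1 * z2 + z2 * z3 + z3 * z1) = 0 /\ z1 + z2 + z3 + k * (z1 * z2 * z3) = 0.
Proof.
  intros n12 n23 n31 B12 B23 B31.
  rewrite biquadratic_sym in B31.
  assert (S1 := biquadratic_root_sum k L z1 z2 z3 n23 B12 B31).
  rewrite biquadratic_sym in B12.
  assert (S2 := biquadratic_root_sum k L z2 z1 z3 ltac:(auto) B12 B23).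
  assert (E2 : 1 + 2 * L + k * (z1 * z2 + z2 * z3 + z3 * z1) = 0).
  { apply (Cmult_eq_0_reg_l (z2 - z1)); [now apply Cminus_eq_contra; auto|].
    apply (Clin_comb_eq_0 1 (-1) S1 S2). ring. }
  split; [exact E2|].
  apply (Clin_comb_eq_0 1 z1 S1 E2). ring.
Qed.

End Vieta.

Section UnitVectors.
Local Open Scope C_scope.

Lemma unit_neq0 (u : C) : dot u u = 1 -> u <> 0.
Proof. intros H E. rewrite E in H. unfold dot in H. simpl in H. lra. Qed.

Lemma unit_Cconj (u : C) : dot u u = 1 -> Cconj u = / u.
Proof.
  intros H. assert (Hu := unit_neq0 u H).
  assert (E : u * Cconj u = 1).
  { unfold dot in H. apply injective_projections; simpl; lra. }
  replace (Cconj u) with (/ u * (u * Cconj u)) by (field; exact Hu).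
  rewrite E. ring.
Qed.

Lemma biquadratic_unit k L (u v : C) : dot u u = 1 -> dot v v = 1 ->
  caustic_relation k L u v -> biquadratic k L u v = 0.
Proof.
  intros Hu Hv Huv.
  assert (u0 := unit_neq0 u Hu). assert (v0 := unit_neq0 v Hv).
  assert (G : u * / v + v * / u - k * (u * v + / u * / v) - 2 * L = 0).
  { rewrite <- (unit_Cconj u Hu), <- (unit_Cconj v Hv).
    unfold caustic_relation, dot in Huv.
    apply injective_projections; simpl; lra. }
  replace (biquadratic k L u v) with (u * v * (u * / v + v * / u - k * (u * v + / u * / v) - 2 * L))
    by (unfold biquadratic; field; tauto).
  rewrite G. ring.
Qed.

Lemma Cinv_neq (x y : C) : x <> 0 -> y <> 0 -> x <> y -> / x <> / y.
Proof.
  intros Hx Hy Hxy E. apply Hxy.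
  replace x with (/ / x) by (field; exact Hx). rewrite E. field. exact Hy.
Qed.

Lemma three_unit_vectors (u1 u2 u3 : pt) (k L : R) :
  dot u1 u1 = 1 -> dot u2 u2 = 1 -> dot u3 u3 = 1 ->
  wedge u1 u2 <> 0 -> wedge u2 u3 <> 0 -> wedge u3 u1 <> 0 ->
  caustic_relation k L u1 u2 -> caustic_relation k L u2 u3 -> caustic_relation k L u3 u1 ->
  (k ^ 2 = 1 + 2 * L /\ 2 * (dot u1 u2 + dot u2 u3 + dot u3 u1) = k ^ 2 - 3)%R.
Proof.
  intros U1 U2 U3 W12 W23 W31 R12 R23 R31.
  assert (n1 := unit_neq0 u1 U1). assert (n2 := unit_neq0 u2 U2). assert (n3 := unit_neq0 u3 U3).
  assert (d12 := wedge_neq0_neq u1 u2 W12). assert (d23 := wedge_neq0_neq u2 u3 W23).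
  assert (d31 := wedge_neq0_neq u3 u1 W31).
  assert (B12 := biquadratic_unit k L u1 u2 U1 U2 R12).
  assert (B23 := biquadratic_unit k L u2 u3 U2 U3 R23).
  assert (B31 := biquadratic_unit k L u3 u1 U3 U1 R31).
  destruct (biquadratic_vieta k L u1 u2 u3 d12 d23 d31 B12 B23 B31) as [Ez2 Ez1].
  destruct (biquadratic_vieta k L (/ u1) (/ u2) (/ u3) (Cinv_neq _ _ n1 n2 d12)
    (Cinv_neq _ _ n2 n3 d23) (Cinv_neq _ _ n3 n1 d31) (biquadratic_inv _ _ _ _ n1 n2 B12)
    (biquadratic_inv _ _ _ _ n2 n3 B23) (biquadratic_inv _ _ _ _ n3 n1 B31)) as [Ew2 _].
  (* e2(1/u) = e1(u)/e3(u) and e1(1/u) = e2(u)/e3(u). *)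
  assert (K : RtoC k * k = 1 + 2 * L).
  { apply Cminus_diag_uniq, (Clin_comb_eq_0 (-1) (k / (u1 * u2 * u3)) Ew2 Ez1). field. tauto. }
  assert (S : u1 * / u2 + u2 * / u1 + (u2 * / u3 + u3 * / u2) + (u3 * / u1 + u1 * / u3)
              - (k * k - 3) = 0).
  { rewrite K.
    apply (Clin_comb_eq_0 ((u1 * u2 + u2 * u3 + u3 * u1) / (u1 * u2 * u3)) (-1) Ez1 Ez2).
    field. tauto. }
  rewrite <- (unit_Cconj u1 U1), <- (unit_Cconj u2 U2), <- (unit_Cconj u3 U3) in S.
  apply (f_equal fst) in K. apply (f_equal fst) in S. simpl in K, S.
  unfold dot. split; nra.
Qed.

End UnitVectors.

Definition unit_dir (P Q : pt) : pt :=
  ((fst Q - fst P) / dist P Q, (snd Q - snd P) / dist P Q).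

Definition ellipse_normal (a b : R) (P : pt) : pt := (fst P / a ^ 2, snd P / b ^ 2).

Lemma dist_sym (P Q : pt) : dist P Q = dist Q P.
Proof. unfold dist. f_equal. ring. Qed.

Lemma dist_sqr (P Q : pt) : dist P Q ^ 2 = (fst P - fst Q) ^ 2 + (snd P - snd Q) ^ 2.
Proof.
  unfold dist. rewrite pow2_sqrt; [reflexivity | apply Rplus_le_le_0_compat; apply pow2_ge_0].
Qed.

Lemma sum_sqr_eq0 (p q : R) : p ^ 2 + q ^ 2 = 0 -> p = 0 /\ q = 0.
Proof. intros H. split; nra. Qed.

Lemma dist_pos (P Q : pt) : P <> Q -> 0 < dist P Q.
Proof.
  intros H. unfold dist. apply sqrt_lt_R0.
  destruct P as [x1 y1], Q as [x2 y2]; simpl.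
  assert (Hs : 0 <= (x1 - x2) ^ 2 + (y1 - y2) ^ 2)
    by (apply Rplus_le_le_0_compat; apply pow2_ge_0).
  destruct (Rle_lt_or_eq_dec _ _ Hs) as [Hlt | Heq]; [exact Hlt |].
  destruct (sum_sqr_eq0 _ _ (eq_sym Heq)). exfalso. apply H. f_equal; lra.
Qed.

Lemma dot_unit_dir (P Q : pt) : P <> Q -> dot (unit_dir P Q) (unit_dir P Q) = 1.
Proof.
  intros H. assert (Hd := dist_pos P Q H). assert (Hs := dist_sqr P Q).
  unfold dot, unit_dir; simpl.
  replace 1 with (dist P Q ^ 2 / dist P Q ^ 2) by (field; lra).
  rewrite Hs at 1. field. lra.
Qed.

Lemma nondegenerate_cycle (P Q S : pt) : nondegenerate P Q S -> nondegenerate Q S P.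
Proof. unfold nondegenerate, cross3. intros H E. apply H. lra. Qed.

Lemma nondegenerate_neq (P Q S : pt) : nondegenerate P Q S -> P <> Q.
Proof. unfold nondegenerate, cross3. intros H ->. apply H. ring. Qed.

Lemma nondegenerate_wedge (P Q S : pt) :
  nondegenerate P Q S -> wedge (unit_dir P Q) (unit_dir Q S) <> 0.
Proof.
  intros H.
  assert (dPQ := dist_pos P Q (nondegenerate_neq P Q S H)).
  assert (dQS := dist_pos Q S (nondegenerate_neq Q S P (nondegenerate_cycle P Q S H))).
  replace (wedge (unit_dir P Q) (unit_dir Q S)) with (cross3 P Q S / (dist P Q * dist Q S))
    by (unfold wedge, unit_dir, cross3; simpl; field; lra).
  apply Rmult_integral_contrapositive_currified; [exact H | apply Rinv_neq_0_compat; nra].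
Qed.

Lemma wedge_zero_dot (n d e : pt) :
  dot d d <> 0 -> wedge n d = 0 -> dot d e = 0 -> dot n e = 0.
Proof.
  intros Hd Hnd Hde.
  assert (E : dot d d * dot n e = dot n d * dot d e + wedge n d * wedge e d)
    by (unfold dot, wedge; ring).
  rewrite Hnd, Hde in E.
  apply (Rmult_eq_reg_l (dot d d)); [lra | exact Hd].
Qed.

Lemma dot_sub_self_neq0 (v w : pt) : v <> w -> dot (w - v)%C (w - v)%C <> 0.
Proof.
  intros H E. apply H. destruct v as [vx vy], w as [wx wy].
  unfold dot in E; simpl in E.
  destruct (sum_sqr_eq0 (wx + - vx) (wy + - vy)) as [Ex Ey]; [lra | f_equal; lra].
Qed.

Lemma reflection_law (n v w : pt) : dot v v = 1 -> dot w w = 1 -> v <> w ->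
  wedge n (w - v)%C = 0 -> dot n w = - dot n v.
Proof.
  intros Hv Hw Hvw Hn.
  assert (H := wedge_zero_dot n (w - v)%C (w + v)%C (dot_sub_self_neq0 v w Hvw) Hn
    ltac:(unfold dot in *; simpl; lra)).
  unfold dot in *; simpl in H. lra.
Qed.

Lemma reflection_caustic_relation (a b : R) (n v w : pt) :
  a ^ 2 * fst n ^ 2 + b ^ 2 * snd n ^ 2 = 1 -> dot v v = 1 -> dot w w = 1 -> v <> w ->
  wedge n (w - v)%C = 0 ->
  caustic_relation (dot n w ^ 2 * (a ^ 2 - b ^ 2)) (1 - dot n w ^ 2 * (a ^ 2 + b ^ 2)) v w.
Proof.
  intros Hn Hv Hw Hvw Hnd.
  assert (Hrefl := reflection_law n v w Hv Hw Hvw Hnd).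
  assert (Hdd := dot_sub_self_neq0 v w Hvw).
  destruct n as [nx ny], v as [vx vy], w as [wx wy].
  unfold caustic_relation, dot, wedge in *; simpl in *.
  set (J := nx * wx + ny * wy) in *.
  set (e := vx * wx + vy * wy).
  set (dx := wx + - vx) in *. set (dy := wy + - vy) in *.
  assert (Hdn : nx * dx + ny * dy = 2 * J) by (unfold dx, dy, J in *; lra).
  (* n is parallel to d = w - v, so (d.d) n = (n.d) d = 2 J d. *)
  assert (Nx : (dx ^ 2 + dy ^ 2) * nx = 2 * J * dx).
  { rewrite <- Hdn. transitivity ((nx * dx + ny * dy) * dx + (nx * dy - ny * dx) * dy); [ring|].
    rewrite Hnd. ring. }
  assert (Ny : (dx ^ 2 + dy ^ 2) * ny = 2 * J * dy).
  { rewrite <- Hdn. transitivity ((nx * dx + ny * dy) * dy - (nx * dy - ny * dx) * dx); [ring|].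
    rewrite Hnd. ring. }
  assert (F : (dx ^ 2 + dy ^ 2) ^ 2 = 4 * J ^ 2 * (a ^ 2 * dx ^ 2 + b ^ 2 * dy ^ 2)).
  { transitivity (a ^ 2 * ((dx ^ 2 + dy ^ 2) * nx) ^ 2 + b ^ 2 * ((dx ^ 2 + dy ^ 2) * ny) ^ 2).
    - rewrite <- (Rmult_1_r ((dx ^ 2 + dy ^ 2) ^ 2)), <- Hn. ring.
    - rewrite Nx, Ny. ring. }
  assert (D : dx ^ 2 + dy ^ 2 = 2 * (1 - e)) by (unfold dx, dy, e; nra).
  assert (G : a ^ 2 * dx ^ 2 + b ^ 2 * dy ^ 2
              = (1 - e) * (a ^ 2 + b ^ 2 - (a ^ 2 - b ^ 2) * (vx * wx - vy * wy))).
  { transitivity ((1 - e) * (a ^ 2 + b ^ 2 - (a ^ 2 - b ^ 2) * (vx * wx - vy * wy))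
      + a ^ 2 * ((vx * vx + vy * vy - 1) * wy ^ 2 + (1 - vx ^ 2) * (wx * wx + wy * wy - 1))
      + b ^ 2 * ((vx * vx + vy * vy - 1) * wx ^ 2 + (1 - vy ^ 2) * (wx * wx + wy * wy - 1))).
    - unfold dx, dy, e. ring.
    - rewrite Hv, Hw. ring. }
  assert (He : 1 - e <> 0) by (intro; apply Hdd; lra).
  rewrite D, G in F.
  assert (H1 : 1 - e = J ^ 2 * (a ^ 2 + b ^ 2 - (a ^ 2 - b ^ 2) * (vx * wx - vy * wy))).
  { apply (Rmult_eq_reg_l (4 * (1 - e))); [|lra]. lra. }
  fold e. lra.
Qed.

Lemma ellipse_normal_dual (a b : R) (P : pt) : 0 < a -> 0 < b -> on_ellipse a b P ->
  a ^ 2 * fst (ellipse_normal a b P) ^ 2 + b ^ 2 * snd (ellipse_normal a b P) ^ 2 = 1.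
Proof.
  intros Ha Hb HP. rewrite <- HP. unfold ellipse_normal; simpl. field. lra.
Qed.

Lemma chord_normal_dot (a b : R) (P Q : pt) : 0 < a -> 0 < b ->
  on_ellipse a b P -> on_ellipse a b Q -> P <> Q ->
  dot (ellipse_normal a b Q) (unit_dir P Q) = - dot (ellipse_normal a b P) (unit_dir P Q).
Proof.
  intros Ha Hb HP HQ HPQ.
  assert (Hd := dist_pos P Q HPQ).
  assert (E : dist P Q * (dot (ellipse_normal a b Q) (unit_dir P Q)
                          + dot (ellipse_normal a b P) (unit_dir P Q))
              = (fst Q ^ 2 / a ^ 2 + snd Q ^ 2 / b ^ 2) - (fst P ^ 2 / a ^ 2 + snd P ^ 2 / b ^ 2))
    by (unfold dot, ellipse_normal, unit_dir; simpl; field; lra).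
  unfold on_ellipse in HP, HQ. rewrite HP, HQ, Rminus_diag in E.
  apply Rmult_integral in E. lra.
Qed.

Lemma normal_bisects_wedge (a b : R) (P Q S : pt) : normal_bisects a b P Q S ->
  wedge (ellipse_normal a b P) (unit_dir P Q - unit_dir S P)%C = 0.
Proof.
  unfold normal_bisects, bisector_dir, wedge, ellipse_normal, unit_dir; simpl.
  rewrite (dist_sym S P). intros H. rewrite <- H. unfold Rdiv. ring.
Qed.

Lemma billiard_vertex (a b : R) (P Q S : pt) : 0 < a -> 0 < b ->
  on_ellipse a b P -> nondegenerate S P Q -> normal_bisects a b P Q S ->
  let n := ellipse_normal a b P in
  let v := unit_dir S P in
  let w := unit_dir P Q in
  dot n w = - dot n v /\
  caustic_relation (dot n w ^ 2 * (a ^ 2 - b ^ 2)) (1 - dot n w ^ 2 * (a ^ 2 + b ^ 2)) v w.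
Proof.
  intros Ha Hb HP Hnd Hbis n v w.
  assert (Hv := dot_unit_dir S P (nondegenerate_neq S P Q Hnd)).
  assert (Hw := dot_unit_dir P Q (nondegenerate_neq P Q S (nondegenerate_cycle S P Q Hnd))).
  assert (Hvw := wedge_neq0_neq v w (nondegenerate_wedge S P Q Hnd)).
  assert (Hn := normal_bisects_wedge a b P Q S Hbis).
  split.
  - exact (reflection_law n v w Hv Hw Hvw Hn).
  - exact (reflection_caustic_relation a b n v w (ellipse_normal_dual a b P Ha Hb HP) Hv Hw Hvw Hn).
Qed.

Lemma dot_unit_dir_sides (P Q S : pt) : P <> Q -> Q <> S ->
  dot (unit_dir P Q) (unit_dir Q S)
  = (dist S P ^ 2 - dist P Q ^ 2 - dist Q S ^ 2) / (2 * dist P Q * dist Q S).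
Proof.
  intros HPQ HQS.
  assert (dPQ := dist_pos P Q HPQ). assert (dQS := dist_pos Q S HQS).
  rewrite !dist_sqr. unfold dot, unit_dir; cbn [fst snd]. field. lra.
Qed.

Lemma cross3_heron (P Q S : pt) :
  let p := dist P Q ^ 2 in let q := dist Q S ^ 2 in let s := dist S P ^ 2 in
  cross3 P Q S ^ 2 = (2 * (p * q + q * s + s * p) - p ^ 2 - q ^ 2 - s ^ 2) / 4.
Proof. cbv zeta. rewrite !dist_sqr. unfold cross3. field. Qed.

(* Carnot's identity r / R = cos A + cos B + cos C - 1: the dot product of two
   consecutive side directions is minus the cosine of the angle between them. *)
Lemma inradius_div_circumradius (P1 P2 P3 : pt) : nondegenerate P1 P2 P3 ->
  inradius P1 P2 P3 / (2 * circumradius P1 P2 P3)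
  = - (1 + (dot (unit_dir P1 P2) (unit_dir P2 P3) + dot (unit_dir P2 P3) (unit_dir P3 P1)
            + dot (unit_dir P3 P1) (unit_dir P1 P2))) / 2.
Proof.
  intros H.
  assert (H2 := nondegenerate_cycle _ _ _ H). assert (H3 := nondegenerate_cycle _ _ _ H2).
  assert (n12 := nondegenerate_neq _ _ _ H). assert (n23 := nondegenerate_neq _ _ _ H2).
  assert (n31 := nondegenerate_neq _ _ _ H3).
  assert (d12 := dist_pos _ _ n12). assert (d23 := dist_pos _ _ n23).
  assert (d31 := dist_pos _ _ n31).
  rewrite (dot_unit_dir_sides P1 P2 P3), (dot_unit_dir_sides P2 P3 P1),
    (dot_unit_dir_sides P3 P1 P2) by assumption.
  assert (Hcr : Rabs (cross3 P1 P2 P3) <> 0) by (apply Rabs_no_R0; exact H).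
  unfold inradius, circumradius, tri_area.
  transitivity (cross3 P1 P2 P3 ^ 2
                / ((dist P1 P2 + dist P2 P3 + dist P3 P1)
                   * (dist P1 P2 * dist P2 P3 * dist P3 P1))).
  { rewrite <- pow2_abs. field. repeat split; lra. }
  rewrite cross3_heron. cbv zeta. field. repeat split; lra.
Qed.

Lemma caustic_root (a b k : R) : 0 < b -> b < a -> 0 <= k ->
  (a ^ 2 - b ^ 2) * k ^ 2 + 2 * (a ^ 2 + b ^ 2) * k = 3 * (a ^ 2 - b ^ 2) ->
  k = (2 * sqrt (a ^ 4 - a ^ 2 * b ^ 2 + b ^ 4) - a ^ 2 - b ^ 2) / (a ^ 2 - b ^ 2).
Proof.
  intros Hb Hab Hk Hq.
  set (delta := sqrt (a ^ 4 - a ^ 2 * b ^ 2 + b ^ 4)).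
  assert (Hc : 0 < a ^ 2 - b ^ 2) by nra.
  assert (Hdelta : delta ^ 2 = a ^ 4 - a ^ 2 * b ^ 2 + b ^ 4) by (apply pow2_sqrt; nra).
  assert (Hdelta0 : 0 <= delta) by apply sqrt_pos.
  assert (F : (k - (2 * delta - a ^ 2 - b ^ 2) / (a ^ 2 - b ^ 2))
              * (k + (2 * delta + a ^ 2 + b ^ 2) / (a ^ 2 - b ^ 2)) = 0).
  { transitivity (((a ^ 2 - b ^ 2) * k ^ 2 + 2 * (a ^ 2 + b ^ 2) * k - 3 * (a ^ 2 - b ^ 2))
                  / (a ^ 2 - b ^ 2)
                  + ((a ^ 2 + b ^ 2) ^ 2 + 3 * (a ^ 2 - b ^ 2) ^ 2 - 4 * delta ^ 2)
                  / (a ^ 2 - b ^ 2) ^ 2).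
    - field. lra.
    - rewrite Hq, Hdelta. field. lra. }
  assert (Hneg : 0 < (2 * delta + a ^ 2 + b ^ 2) / (a ^ 2 - b ^ 2))
    by (apply Rdiv_lt_0_compat; nra).
  destruct (Rmult_integral _ _ F); lra.
Qed.

Lemma caustic_axes_product (a b delta : R) : a <> 0 -> b <> 0 -> a ^ 2 - b ^ 2 <> 0 ->
  (1 - ((2 * delta - a ^ 2 - b ^ 2) / (a ^ 2 - b ^ 2)) ^ 2) / 4
  = (a * (delta - b ^ 2) / (a ^ 2 - b ^ 2)) * (b * (a ^ 2 - delta) / (a ^ 2 - b ^ 2)) / (a * b).
Proof. intros Ha Hb Hc. field. tauto. Qed.

Lemma ellipse_area_div (p q a b : R) : a <> 0 -> b <> 0 ->
  ellipse_area p q / ellipse_area a b = p * q / (a * b).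
Proof. intros Ha Hb. unfold ellipse_area. field. split; [|split]; auto using PI_neq0. Qed.

Theorem theorem3 (a b : R) (hb : 0 < b) (hab : b < a) :
  let c2 := a^2 - b^2 in
  let delta := sqrt (a^4 - a^2 * b^2 + b^4) in
  let ac := a * (delta - b^2) / c2 in
  let bc := b * (a^2 - delta) / c2 in
  forall P1 P2 P3 : pt,
    billiard_3orbit a b P1 P2 P3 ->
    ellipse_area ac bc / ellipse_area a b
      = inradius P1 P2 P3 / (2 * circumradius P1 P2 P3).
Proof.
  intros c2 delta ac bc P1 P2 P3 (Hnd & E1 & E2 & E3 & N1 & N2 & N3).
  assert (ha : 0 < a) by lra.
  assert (Hnd2 := nondegenerate_cycle _ _ _ Hnd). assert (Hnd3 := nondegenerate_cycle _ _ _ Hnd2).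
  destruct (billiard_vertex a b P1 P2 P3 ha hb E1 Hnd3 N1) as [_ R31].
  destruct (billiard_vertex a b P2 P3 P1 ha hb E2 Hnd N2) as [S2 R12].
  destruct (billiard_vertex a b P3 P1 P2 ha hb E3 Hnd2 N3) as [S3 R23].
  assert (C12 := chord_normal_dot a b P1 P2 ha hb E1 E2 (nondegenerate_neq _ _ _ Hnd)).
  assert (C23 := chord_normal_dot a b P2 P3 ha hb E2 E3 (nondegenerate_neq _ _ _ Hnd2)).
  set (J := dot (ellipse_normal a b P1) (unit_dir P1 P2)) in *.
  cbv zeta in *.
  assert (J2 : dot (ellipse_normal a b P2) (unit_dir P2 P3) = J) by lra.
  assert (J3 : dot (ellipse_normal a b P3) (unit_dir P3 P1) = J) by lra.
  rewrite J2 in R12. rewrite J3 in R23.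
  destruct (three_unit_vectors _ _ _ _ _
    (dot_unit_dir _ _ (nondegenerate_neq _ _ _ Hnd))
    (dot_unit_dir _ _ (nondegenerate_neq _ _ _ Hnd2))
    (dot_unit_dir _ _ (nondegenerate_neq _ _ _ Hnd3))
    (nondegenerate_wedge _ _ _ Hnd) (nondegenerate_wedge _ _ _ Hnd2)
    (nondegenerate_wedge _ _ _ Hnd3) R12 R23 R31) as [Hk Hsum].
  assert (Hroot := caustic_root a b (J ^ 2 * (a ^ 2 - b ^ 2)) hb hab
    ltac:(apply Rmult_le_pos; [apply pow2_ge_0 | nra]) ltac:(rewrite Hk; ring)).
  rewrite inradius_div_circumradius by exact Hnd.
  unfold ac, bc, c2, delta.
  rewrite ellipse_area_div, <- caustic_axes_product, <- Hroot by nra.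
  lra.
Qed.
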